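(* Let $q=p^e$ with $p$ a prime and $e\ge1$, let $r\ge2$, $m=2r$, and assume $(q,r)\ne(2,2)$. Let $D=\{x\in\mathbb{F}_{q^m}:\mathrm{Tr}_{q^r/q}(x^{q^r+1})=0\}$ and $\overline{\mathcal{C}_D}=\{(\mathrm{Tr}_{q^m/q}(bx)+c)_{x\in D}: b\in\mathbb{F}_{q^m},\ c\in\mathbb{F}_q\}$. Then $\overline{\mathcal{C}_D}$ is self-orthogonal, i.e. $\overline{\mathcal{C}_D}\subseteq\overline{\mathcal{C}_D}^{\perp}$.
   Context: $\mathrm{Tr}_{q^k/q}$ is the trace map from $\mathbb{F}_{q^k}$ to $\mathbb{F}_q$; the dual is with respect to the standard inner product on $\mathbb{F}_q^{|D|}$. *)

From mathcomp Require Import all_boot all_order all_algebra all_field.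
Set Implicit Arguments. Unset Strict Implicit. Unset Printing Implicit Defensive.
Import GRing.Theory.
Local Open Scope ring_scope.

(* Trace from F_{q^n} to F_q, computed inside a finite field K containing
   F_{q^n}: Tr_{q^n/q}(y) = sum_{i<n} y^(q^i). *)
Definition trace (K : finFieldType) (q n : nat) (y : K) : K :=
  \sum_(i < n) y ^+ (q ^ i).

Definition in_Fq (K : finFieldType) (q : nat) (c : K) : bool := c ^+ q == c.

Definition Dset (K : finFieldType) (q r : nat) : {set K} :=
  [set x : K | trace q r (x ^+ (q ^ r + 1)) == 0].

(* The codeword (Tr_{q^m/q}(b x) + c)_{x in D}, as a function on K
   (only its values on D matter). *)
Definition codeword (K : finFieldType) (q m : nat) (b c : K) : K -> K :=
  fun x => trace q m (b * x) + c.

Definition in_code (K : finFieldType) (q m : nat) (u : K -> K) : Prop :=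
  exists b c : K, in_Fq q c /\ u = codeword q m b c.

Definition innerD (K : finFieldType) (D : {set K}) (u v : K -> K) : K :=
  \sum_(x in D) u x * v x.

Definition self_orthogonal (K : finFieldType) (q m : nat) (D : {set K}) : Prop :=
  forall u v : K -> K, in_code q m u -> in_code q m v -> innerD D u v = 0.

From mathcomp Require Import all_boot all_algebra all_fingroup all_field all_solvable.
From mathcomp Require Import zify.
Set Implicit Arguments.
Unset Strict Implicit.
Unset Printing Implicit Defensive.
Import GRing.Theory.
Local Open Scope ring_scope.

(* Put n = q^r + 1. Then |K^*| = n (q^r - 1) and D is stable under multiplication
   by the n-th roots of unity, so \sum_(x in D) x^k = 0 unless n divides k.
   Expanding the inner product of two codewords, every term is such a power sum,
   except the constant term c c' |D| and the exponents q^i + q^j with |i - j| = r,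
   whose sums are Frobenius images of \sum_(x in D) x^n.  These two quantities are
   computed over all of K by writing the indicator of D as 1 - T(x)^(q-1), where
   T(x) = Tr_{q^r/q}(x^n) lies in F_q: the resulting sums \sum_x T(x)^j x^(n s) are
   polynomials in x^n with degrees strictly between 0 and q^r - 1, hence vanish.
   For \sum_(x in D) x^n the degree is 1 + (q - 1) q^(r-1), and keeping it below
   q^r - 1 is exactly where (q, r) <> (2, 2) is used. *)

Lemma dvdn_expn_addn1 (q r d : nat) : (1 < q)%N -> (d < 2 * r)%N ->
  (q ^ r + 1 %| q ^ d + 1)%N = (d == r).
Proof.
move=> q_gt1 d_lt; have [d_lt_r|r_lt_d|->] := ltngtP d r; last by rewrite dvdnn.
  by apply: gtnNdvd; rewrite ?addn1 // ltnS ltn_exp2l.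
have qs_gt1 : (1 < q ^ (d - r))%N by rewrite -{1}(expn0 q) ltn_exp2l //; lia.
have qs_lt : (q ^ (d - r) < q ^ r)%N by rewrite ltn_exp2l //; lia.
have splitE : (q ^ (d - r) * (q ^ r + 1) = (q ^ d + 1) + (q ^ (d - r) - 1))%N.
  by rewrite mulnDr muln1 -expnD subnK ?(ltnW r_lt_d) //; lia.
apply/negbTE; apply: contraL (dvdn_mull (q ^ (d - r)) (dvdnn (q ^ r + 1))) => dvd_d.
by rewrite splitE dvdn_addr // gtnNdvd //; lia.
Qed.

Lemma expn_pred_gt2 (q r : nat) : (1 < q)%N -> (1 < r)%N -> (q, r) <> (2%N, 2%N) ->
  (2 < q ^ r.-1)%N.
Proof.
move=> q_gt1 r_gt1 qr_neq; case: r r_gt1 qr_neq => [|[|[|r]]] //= _ qr_neq.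
  by rewrite expn1; case: q q_gt1 qr_neq => [|[|[|q]]].
have : (q ^ 2 <= q ^ r.+2)%N by rewrite leq_pexp2l //; lia.
rewrite expnS expn1; nia.
Qed.

Lemma expr_sum_pchar (R : comNzSemiRingType) (I : Type) (s : seq I) (P : pred I)
    (F : I -> R) (N : nat) :
  [pchar R].-nat N -> (\sum_(i <- s | P i) F i) ^+ N = \sum_(i <- s | P i) F i ^+ N.
Proof.
move=> charN; apply: (big_morph (fun x => x ^+ N)) => [x y|]; first exact: exprDn_pchar.
by rewrite expr0n; case: N charN.
Qed.

Lemma indicator_eq0_fixed_expr (F : fieldType) (q : nat) (t : F) :
  (1 < q)%N -> t ^+ q = t -> ((t == 0)%:R : F) = 1 - t ^+ q.-1.
Proof.
move=> q_gt1 tq; have [->|t_neq0] := eqVneq t 0.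
  by rewrite expr0n; case: q q_gt1 {tq} => [|[|q]] //= _; rewrite subr0.
suff -> : t ^+ q.-1 = 1 by rewrite subrr.
by apply: (mulfI t_neq0); rewrite -exprS prednK ?tq ?mulr1 //; lia.
Qed.

Section PowerSums.
Variable K : finFieldType.

Lemma natr_card_finField : (#|K|%:R : K) = 0.
Proof. by rewrite -FinRing.zmodXgE -cardsT (expg_cardG (G := setT_group K)) ?inE. Qed.

Lemma prim_root_dvdn_card (n : nat) : (n %| #|K|.-1)%N -> exists z : K, n.-primitive_root z.
Proof.
move=> n_dvd; have K_gt1 : (1 < #|K|)%N := finNzRing_gt1 K.
have unity_K : all (#|K|.-1).-unity_root (enum (predC1 (0 : K))).
  apply/allP => x; rewrite mem_enum inE unity_rootE => x_neq0.
  by apply/eqP/(mulfI x_neq0); rewrite mulr1 -exprS prednK ?expf_card //; lia.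
have [||g _ g_prim] := hasP (has_prim_root _ unity_K (enum_uniq _) _).
- by lia.
- by rewrite -cardE cardC1.
by exists (g ^+ (#|K|.-1 %/ n)); apply: dvdn_prim_root.
Qed.

Lemma sum_expr_mul_stable_eq0 (A : {pred K}) (n k : nat) (z : K) :
    n.-primitive_root z -> (forall x, (z * x \in A) = (x \in A)) -> ~~ (n %| k)%N ->
  \sum_(x in A) x ^+ k = 0.
Proof.
move=> z_prim zA n_ndvd_k.
have z_neq0 : z != 0 by rewrite (prim_root_eq0 z_prim) -lt0n (prim_order_gt0 z_prim).
have zk_neq1 : z ^+ k != 1 by rewrite -(prim_order_dvd z_prim).
have sumE : \sum_(x in A) x ^+ k = z ^+ k * \sum_(x in A) x ^+ k.
  rewrite {1}(reindex_inj (mulfI z_neq0)) mulr_sumr /=.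
  by apply: eq_big => [x|x _]; rewrite ?zA ?exprMn.
apply: (mulfI (_ : 1 - z ^+ k != 0)); first by rewrite subr_eq0 eq_sym.
by rewrite mulr0 mulrBl mul1r -sumE subrr.
Qed.

Lemma sum_expr_finField_eq0 (k : nat) : ~~ (#|K|.-1 %| k)%N -> \sum_(x : K) x ^+ k = 0.
Proof.
have [z z_prim] := prim_root_dvdn_card (dvdnn #|K|.-1).
exact: (@sum_expr_mul_stable_eq0 predT _ k z z_prim).
Qed.

Lemma sum_horner_expr_eq0 (n M : nat) (Q : {poly K}) :
  (n * M)%N = #|K|.-1 -> Q`_0 = 0 -> (size Q <= M)%N -> \sum_(x : K) Q.[x ^+ n] = 0.
Proof.
move=> nM Q0 szQ; have K_gt1 : (1 < #|K|)%N := finNzRing_gt1 K.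
under eq_bigr do rewrite horner_coef.
rewrite exchange_big /=; apply: big1 => -[[|k] /= k_lt] _; rewrite -mulr_sumr.
  by rewrite Q0 mul0r.
under eq_bigr do rewrite -exprM.
rewrite sum_expr_finField_eq0 ?mulr0 // -nM.
have n_gt0 : (0 < n)%N by case: n nM => //; rewrite mul0n; lia.
by rewrite dvdn_pmul2l // gtnNdvd // (leq_trans k_lt szQ).
Qed.

End PowerSums.

Section Dset.
Variables (K : finFieldType) (q r : nat).
Hypotheses (charK_q : [pchar K].-nat q) (q_gt1 : (1 < q)%N) (r_gt1 : (1 < r)%N).
Hypothesis cardK : #|K| = (q ^ (2 * r))%N.

Local Notation D := (Dset K q r).

Lemma expr0_qpow (i : nat) : (0 : K) ^+ (q ^ i) = 0.
Proof. by rewrite expr0n expn_eq0 eqn0Ngt (ltnW q_gt1). Qed.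

Lemma predn_card_factor : #|K|.-1 = ((q ^ r + 1) * (q ^ r - 1))%N.
Proof.
rewrite cardK mul2n -addnn expnD.
have : (0 < q ^ r)%N by rewrite expn_gt0; lia.
nia.
Qed.

Lemma trace_norm_fixed (x : K) :
  trace q r (x ^+ (q ^ r + 1)) ^+ q = trace q r (x ^+ (q ^ r + 1)).
Proof.
rewrite /trace expr_sum_pchar //; case: r r_gt1 cardK => // r' _ cardK'.
rewrite big_ord_recr big_ord_recl /= expn0 expr1 addrC; congr (_ + _).
  rewrite -!exprM -mulnA -expnSr mulnDl mul1n exprD -expnD addnn -mul2n -cardK' expf_card.
  by rewrite addn1 exprS.
by apply: eq_bigr => i _; rewrite -!exprM -mulnA -expnSr.
Qed.

Lemma sum_Dset_indicator (f : K -> K) :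
  \sum_(x in D) f x = \sum_(x : K) (1 - trace q r (x ^+ (q ^ r + 1)) ^+ q.-1) * f x.
Proof.
rewrite big_mkcond; apply: eq_bigr => x _.
by rewrite inE -indicator_eq0_fixed_expr ?trace_norm_fixed //; case: eqP; rewrite ?mul1r ?mul0r.
Qed.

Lemma sum_trace_norm_expr_eq0 (j s : nat) :
    (0 < j + s)%N -> (s + j * q ^ r.-1 < q ^ r - 1)%N ->
  \sum_(x : K) trace q r (x ^+ (q ^ r + 1)) ^+ j * x ^+ ((q ^ r + 1) * s) = 0.
Proof.
move=> js_gt0 deg_lt.
pose P : {poly K} := \sum_(i < r) 'X^(q ^ i).
have PE x : trace q r (x ^+ (q ^ r + 1)) ^+ j * x ^+ ((q ^ r + 1) * s)
    = (P ^+ j * 'X^s).[x ^+ (q ^ r + 1)].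
  rewrite hornerM hornerXn horner_exp horner_sum exprM; congr (_ ^+ _ * _).
  by apply: eq_bigr => i _; rewrite hornerXn.
under eq_bigr do rewrite PE.
apply: (@sum_horner_expr_eq0 _ (q ^ r + 1) (q ^ r - 1)); first by rewrite predn_card_factor.
  rewrite -horner_coef0 hornerM hornerXn horner_exp horner_sum big1 => [|i _].
    by rewrite -exprD expr0n eqn0Ngt js_gt0.
  by rewrite horner_exp hornerX expr0_qpow.
have szP : (size P <= (q ^ r.-1).+1)%N.
  rewrite (leq_trans (size_sum _ _ _)) //; apply/bigmax_leqP => i _.
  by rewrite size_polyXn ltnS leq_pexp2l //; case: r r_gt1 i => // r' _ [i /=]; lia.
rewrite (leq_trans (size_polyMleq _ _)) // size_polyXn addnS /=.
rewrite (leq_trans (leq_add (size_poly_exp_leq _ _) (leqnn s))) //.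
have : ((size P).-1 * j <= q ^ r.-1 * j)%N by apply: leq_mul; lia.
lia.
Qed.

Lemma card_Dset_eq0 : (#|D|%:R : K) = 0.
Proof.
have qr_split : (q ^ r = q * q ^ r.-1)%N by rewrite -expnS prednK //; lia.
have qr_ge : (q <= q ^ r.-1)%N by rewrite -{1}(expn1 q) leq_pexp2l //; lia.
have sumT : \sum_(x : K) trace q r (x ^+ (q ^ r + 1)) ^+ q.-1 = 0.
  have := @sum_trace_norm_expr_eq0 q.-1 0; rewrite muln0.
  by under eq_bigr do rewrite expr0 mulr1; apply; [lia | rewrite qr_split; nia].
rewrite -sumr_const sum_Dset_indicator.
under eq_bigr do rewrite mulr1.
by rewrite sumrB sumr_const natr_card_finField sumT subr0.
Qed.

Lemma sum_Dset_norm_eq0 : (q, r) <> (2%N, 2%N) -> \sum_(x in D) x ^+ (q ^ r + 1) = 0.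
Proof.
move=> qr_neq; have qr_gt2 := expn_pred_gt2 q_gt1 r_gt1 qr_neq.
have qr_split : (q ^ r = q * q ^ r.-1)%N by rewrite -expnS prednK //; lia.
have sumN : \sum_(x : K) x ^+ (q ^ r + 1) = 0.
  have := @sum_trace_norm_expr_eq0 0 1; rewrite muln1.
  by under eq_bigr do rewrite expr0 mul1r; apply=> //; rewrite qr_split; nia.
have sumTN : \sum_(x : K) trace q r (x ^+ (q ^ r + 1)) ^+ q.-1 * x ^+ (q ^ r + 1) = 0.
  have := @sum_trace_norm_expr_eq0 q.-1 1; rewrite muln1.
  by apply; [lia | rewrite qr_split; nia].
rewrite sum_Dset_indicator.
under eq_bigr do rewrite mulrBl mul1r.
by rewrite sumrB sumN sumTN subr0.
Qed.

Lemma mem_Dset_mul (z x : K) : z ^+ (q ^ r + 1) = 1 -> (z * x \in D) = (x \in D).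
Proof. by move=> z_root; rewrite !inE exprMn z_root mul1r. Qed.

Lemma sum_Dset_expr_eq0 (k : nat) : ~~ (q ^ r + 1 %| k)%N -> \sum_(x in D) x ^+ k = 0.
Proof.
have [|z z_prim] := @prim_root_dvdn_card K (q ^ r + 1).
  by rewrite predn_card_factor dvdn_mulr.
move=> k_ndvd; apply: (sum_expr_mul_stable_eq0 z_prim _ k_ndvd) => x.
exact: mem_Dset_mul (prim_expr_order z_prim).
Qed.

Lemma sum_Dset_expr_qpow_eq0 (i : nat) : \sum_(x in D) x ^+ (q ^ i) = 0.
Proof.
have -> : \sum_(x in D) x ^+ (q ^ i) = (\sum_(x in D) x) ^+ (q ^ i).
  by rewrite expr_sum_pchar ?pnatX ?charK_q.
have sum_x : \sum_(x in D) x ^+ 1 = 0.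
  by apply: sum_Dset_expr_eq0; rewrite dvdn1 addn1 eqSS expn_eq0 eqn0Ngt (ltnW q_gt1).
by rewrite (eq_bigr _ (fun x _ => esym (expr1 x))) sum_x expr0_qpow.
Qed.

Lemma sum_Dset_expr_qpow_add_eq0 (i j : nat) : (q, r) <> (2%N, 2%N) ->
  (i < 2 * r)%N -> (j < 2 * r)%N -> \sum_(x in D) x ^+ (q ^ i + q ^ j) = 0.
Proof.
move=> qr_neq i_lt j_lt; wlog le_ij : i j i_lt j_lt / (i <= j)%N => [sym|].
  have [le_ij|/ltnW le_ji] := leqP i j; first exact: sym.
  by rewrite addnC; exact: sym.
set d := (j - i)%N.
have -> : \sum_(x in D) x ^+ (q ^ i + q ^ j) = (\sum_(x in D) x ^+ (q ^ d + 1)) ^+ (q ^ i).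
  rewrite expr_sum_pchar ?pnatX ?charK_q //; apply: eq_bigr => x _.
  by rewrite -exprM mulnDl -expnD subnK // mul1n addnC.
have [->|d_neq] := eqVneq d r; first by rewrite sum_Dset_norm_eq0 // expr0_qpow.
by rewrite sum_Dset_expr_eq0 ?expr0_qpow // dvdn_expn_addn1 // ?d_neq //; lia.
Qed.

Lemma sum_Dset_trace_eq0 (b : K) : \sum_(x in D) trace q (2 * r) (b * x) = 0.
Proof.
rewrite exchange_big big1 // => i _.
by under eq_bigr do rewrite exprMn; rewrite -mulr_sumr sum_Dset_expr_qpow_eq0 mulr0.
Qed.

Lemma sum_Dset_trace_mul_eq0 (b b' : K) : (q, r) <> (2%N, 2%N) ->
  \sum_(x in D) trace q (2 * r) (b * x) * trace q (2 * r) (b' * x) = 0.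
Proof.
move=> qr_neq; under eq_bigr do rewrite /trace mulr_suml; rewrite exchange_big big1 // => i _.
under eq_bigr do rewrite mulr_sumr; rewrite exchange_big big1 // => j _.
under eq_bigr do rewrite !exprMn mulrACA -exprD.
by rewrite -mulr_sumr sum_Dset_expr_qpow_add_eq0 ?mulr0.
Qed.

End Dset.

Theorem theorem3p8 (p e r : nat) (K : finFieldType) :
  prime p -> (0 < e)%N -> (2 <= r)%N ->
  ((p ^ e)%N, r) <> (2%N, 2%N) ->
  #|K| = ((p ^ e) ^ (2 * r))%N ->
  self_orthogonal (p ^ e)%N (2 * r)%N (Dset K (p ^ e)%N r).
Proof.
move=> p_prime e_gt0 r_gt1 qr_neq cardK u v [b [c [_ ->]]] [b' [c' [_ ->]]].
have charK_p : p \in [pchar K] by apply: card_finPcharP p_prime; rewrite cardK -expnM.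
have charK_q : [pchar K].-nat (p ^ e)%N.
  by rewrite (eq_pnat _ (pcharf_eq charK_p)) pnatX pnat_id ?orbT.
have q_gt1 : (1 < p ^ e)%N by rewrite -{1}(expn0 p) ltn_exp2l ?prime_gt1.
rewrite /innerD /codeword.
under eq_bigr do rewrite mulrDl !mulrDr.
rewrite !big_split /= -mulr_suml -mulr_sumr sumr_const -mulr_natr.
by rewrite sum_Dset_trace_mul_eq0 ?sum_Dset_trace_eq0 ?card_Dset_eq0 ?mul0r ?mulr0 ?addr0.
Qed.
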